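(* For the linear classification problem (estimating the margin $\max_{\|x\|\le1}\min_iA_ix$) and for the minimum enclosing ball problem (estimating $\min_x\max_i\|x-A_i\|^2$), there is no Las Vegas algorithm that reads an expected $o(M)$ entries of its input matrix and solves the problem to within a one-sided additive error of at most $1/2$. This holds even if $\|A_i\|=1$ for all rows $A_i$.
   Context: The input is an $n\times d$ real matrix $A$ with $M$ nonzero entries and rows of Euclidean norm at most $1$. A Las Vegas algorithm is a randomized algorithm whose output is always correct (never errs); its cost is the expected number of entries read. *)

From HB Require Import structures.
From mathcomp Require Import all_boot all_order all_algebra.
From mathcomp Require Import all_classical all_reals all_analysis.
Set Implicit Arguments. Unset Strict Implicit. Unset Printing Implicit Defensive.
Import Order.TTheory GRing.Theory Num.Theory.
Local Open Scope classical_set_scope.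
Local Open Scope ring_scope.

Section Defs.
Variable R : realType.

(* Deterministic query algorithm on an n x d real matrix: a (well-founded)
   decision tree. *)
Inductive qtree (n d : nat) : Type :=
| Leaf of R
| Query of 'I_n & 'I_d & (R -> qtree n d).

Fixpoint run n d (t : qtree n d) (A : 'M[R]_(n, d)) : R :=
  match t with
  | Leaf v => v
  | Query i j k => run (k (A i j)) A
  end.

Fixpoint cost n d (t : qtree n d) (A : 'M[R]_(n, d)) : nat :=
  match t with
  | Leaf _ => 0
  | Query i j k => (cost (k (A i j)) A).+1
  end.

(* M = number of nonzero entries of A *)
Definition nnz n d (A : 'M[R]_(n, d)) : nat :=
  #|[set ij : 'I_n * 'I_d | A ij.1 ij.2 != 0]|.

Definition unit_rows n d (A : 'M[R]_(n, d)) : Prop :=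
  forall i : 'I_n, \sum_(j < d) A i j ^+ 2 = 1.

Definition margin n d (A : 'M[R]_(n, d)) : R :=
  sup ((fun x : 'I_d -> R =>
          inf ((fun i : 'I_n => \sum_(j < d) A i j * x j) @` [set: 'I_n]))
       @` [set x : 'I_d -> R | \sum_(j < d) x j ^+ 2 <= 1]).

Definition meb n d (A : 'M[R]_(n, d)) : R :=
  inf ((fun x : 'I_d -> R =>
          sup ((fun i : 'I_n => \sum_(j < d) (x j - A i j) ^+ 2) @` [set: 'I_n]))
       @` [set: 'I_d -> R]).

(* A randomized algorithm: a random seed w drawn from a probability space
   (Omega, P), and for each seed and each dimension pair (n, d) a
   deterministic query algorithm. *)
Definition expected_cost (d0 : measure_display) (Omega : measurableType d0)
  (P : probability Omega R) (alg : forall n d : nat, Omega -> qtree n d)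
  n d (A : 'M[R]_(n, d)) : \bar R :=
  (\int[P]_w ((cost (alg n d w) A)%:R)%:E)%E.

Definition sublinear_expected_cost (d0 : measure_display) (Omega : measurableType d0)
  (P : probability Omega R) (alg : forall n d : nat, Omega -> qtree n d) : Prop :=
  forall eps : R, 0 < eps -> exists M0 : nat,
    forall n d (A : 'M[R]_(n, d)), unit_rows A -> (M0 <= nnz A)%N ->
      (expected_cost P alg A <= (eps * (nnz A)%:R)%:E)%E.

Definition cost_measurable (d0 : measure_display) (Omega : measurableType d0)
  (alg : forall n d : nat, Omega -> qtree n d) : Prop :=
  forall n d (A : 'M[R]_(n, d)), unit_rows A ->
    measurable_fun [set: Omega] (fun w => ((cost (alg n d w) A)%:R : R)).

End Defs.

From HB Require Import structures.
From mathcomp Require Import all_boot all_order all_algebra.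
From mathcomp Require Import all_classical all_reals all_analysis.
From mathcomp Require Import lra.
Import Order.TTheory GRing.Theory Num.Theory.
Set Implicit Arguments. Unset Strict Implicit.
Local Open Scope classical_set_scope.
Local Open Scope ring_scope.

(* Consider the n x 1 matrix of ones and, for each row i0, the matrix obtained
   by flipping its entry i0 to -1; all of them have unit rows and n nonzero
   entries.  The all-ones matrix has margin 1 and enclosing-ball value 0, while
   each flipped one (n >= 2) has margin at most 0 and enclosing-ball value at
   least 1.  An error of 1/2 forces every run of the algorithm to tell the
   all-ones input apart from every flipped one, hence to read all n entries of
   it, so the expected cost on the all-ones input is n = M, not o(M). *)

Section QueryTrees.
Variable R : realType.

Fixpoint visited n d (t : qtree R n d) (A : 'M[R]_(n, d)) : seq ('I_n * 'I_d) :=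
  match t with
  | Leaf _ => [::]
  | Query i j k => (i, j) :: visited (k (A i j)) A
  end.

Lemma size_visited n d (t : qtree R n d) A : size (visited t A) = cost t A.
Proof. by elim: t => [v|i j k IH] //=; rewrite IH. Qed.

Lemma run_eq_on_visited n d (t : qtree R n d) (A B : 'M[R]_(n, d)) :
  (forall p, p \in visited t A -> A p.1 p.2 = B p.1 p.2) -> run t B = run t A.
Proof.
elim: t => [v|i j k IH] //= eqAB.
have -> : B i j = A i j by rewrite (eqAB (i, j)) // mem_head.
by apply: IH => p p_vis; apply: eqAB; rewrite in_cons p_vis orbT.
Qed.

Lemma card_le_cost n d (I : finType) (t : qtree R n d) (A : 'M[R]_(n, d))
    (pos : I -> 'I_n * 'I_d) (B : I -> 'M[R]_(n, d)) :
  injective pos ->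
  (forall k p, p != pos k -> B k p.1 p.2 = A p.1 p.2) ->
  (forall k, run t (B k) <> run t A) ->
  (#|I| <= cost t A)%N.
Proof.
move=> pos_inj B_off run_neq; rewrite -size_visited.
have all_visited k : pos k \in visited t A.
  apply/negPn/negP => k_unvisited; apply: (run_neq k); apply: run_eq_on_visited.
  move=> p p_vis; rewrite B_off //; apply: contraNneq k_unvisited => <-.
  exact: p_vis.
rewrite cardE -(size_map pos); apply: uniq_leq_size.
  by rewrite map_inj_uniq ?enum_uniq.
by move=> p /mapP [k _ ->].
Qed.

End QueryTrees.

Section Expectation.
Variables (R : realType) (d0 : measure_display) (Omega : measurableType d0).
Variables (P : probability Omega R) (alg : forall n d : nat, Omega -> qtree R n d).

Lemma expected_cost_ge n d (A : 'M[R]_(n, d)) (c : nat) :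
  measurable_fun [set: Omega] (fun w => ((cost (alg n d w) A)%:R : R)) ->
  (forall w, c <= cost (alg n d w) A)%N ->
  ((c%:R)%:E <= expected_cost P alg A)%E.
Proof.
move=> cost_mes cost_ge; rewrite /expected_cost.
have := @ge0_le_integral _ _ _ P setT measurableT (fun=> (c%:R)%:E)
  (fun w => ((cost (alg n d w) A)%:R)%:E).
rewrite integral_cst // [X in (_ * X)%E]probability_setT mule1; apply.
- by move=> *; rewrite lee_fin.
- exact: measurable_cst.
- exact/measurable_realfun.measurable_EFinP.
- by move=> w _; rewrite lee_fin ler_nat.
Qed.

Lemma not_sublinear_of_cost_ge_nnz :
  (forall M0, exists n d (A : 'M[R]_(n, d)),
     [/\ unit_rows A, (M0 <= nnz A)%N, (0 < nnz A)%N &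
         ((nnz A)%:R%:E <= expected_cost P alg A)%E]) ->
  ~ sublinear_expected_cost P alg.
Proof.
move=> hard /(_ (2^-1) ltac:(by rewrite invr_gt0)) [M0 sublin].
have [n [d [A [unitA M0_le nnz_gt0 cost_ge]]]] := hard M0.
have := le_trans cost_ge (sublin n d A unitA M0_le); rewrite lee_fin.
have : 0 < (nnz A)%:R :> R by rewrite ltr0n.
lra.
Qed.

End Expectation.

Section HardInstances.
Variable R : realType.

Definition ones_col n : 'M[R]_(n, 1) := const_mx 1.

Definition flip_col n (i0 : 'I_n) : 'M[R]_(n, 1) :=
  \matrix_(i, j) (if i == i0 then -1 else 1).

Lemma unit_rows_ones_col n : unit_rows (ones_col n).
Proof. by move=> i; rewrite big_ord1 mxE expr1n. Qed.

Lemma unit_rows_flip_col n (i0 : 'I_n) : unit_rows (flip_col i0).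
Proof. by move=> i; rewrite big_ord1 mxE; case: ifP; rewrite ?sqrrN expr1n. Qed.

Lemma nnz_ones_col n : nnz (ones_col n) = n.
Proof.
rewrite /nnz (eq_card (B := [set: 'I_n * 'I_1]%SET)).
  by rewrite cardsT card_prod !card_ord muln1.
by move=> ij; rewrite finset.in_setT; apply/asboolP; rewrite /= mxE oner_neq0.
Qed.

Lemma cost_ones_col n (t : qtree R n 1) :
  (forall i0, run t (flip_col i0) <> run t (ones_col n)) ->
  (n <= cost t (ones_col n))%N.
Proof.
move=> run_neq; rewrite -[X in (X <= _)%N]card_ord.
apply: (card_le_cost (pos := fun i => (i, ord0))) run_neq.
  by move=> i i' [].
move=> i0 [i j] /=; rewrite (ord1 j) !mxE; by case: (eqVneq i i0) => // ->; rewrite eqxx.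
Qed.

Lemma margin_flip_col n (i0 i1 : 'I_n) : i1 != i0 -> margin (flip_col i0) <= 0.
Proof.
move=> i10; apply: ge_sup => [|_ [x _ <-]].
  by eexists; exists (fun=> 0); rewrite //= big_ord1 expr0n.
set S := (fun i : 'I_n => _) @` _.
have S_lb : has_lbound S.
  exists (- `|x ord0|) => _ [i _ <-]; rewrite big_ord1 mxE.
  have := ler_norm (x ord0); have := ler_norm (- x ord0); rewrite normrN.
  case: ifP => _; lra.
have inf_le i : inf S <= \sum_(j < 1) flip_col i0 i j * x j.
  by apply: (ge_inf S_lb); exists i.
move: (inf_le i0) (inf_le i1); rewrite !big_ord1 !mxE eqxx (negbTE i10); lra.
Qed.

Lemma margin_ones_col n : (0 < n)%N -> 1 <= margin (ones_col n).
Proof.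
move=> n_gt0; set i1 := Ordinal n_gt0; rewrite /margin /meb; set E := (fun x : 'I_1 -> R => _) @` _.
have E_ub : has_ubound E.
  exists 1 => _ [x x_ball <-]; set S := (fun i : 'I_n => _) @` _.
  have S_lb : has_lbound S.
    by exists (x ord0) => _ [i _ <-]; rewrite big_ord1 mxE mul1r.
  have : inf S <= \sum_(j < 1) ones_col n i1 j * x j.
    by apply: (ge_inf S_lb); exists i1.
  by move: x_ball; rewrite /= !big_ord1 mxE mul1r; nra.
apply: le_trans (ub_le_sup E_ub _); last first.
  by exists (fun=> 1); rewrite //= big_ord1 expr1n.
apply: lb_le_inf => [|_ [i _ <-]]; last by rewrite big_ord1 mxE mulr1.
by eexists; exists i1.
Qed.

Lemma meb_ones_col n : (0 < n)%N -> meb (ones_col n) <= 0.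
Proof.
move=> n_gt0; set i1 := Ordinal n_gt0; rewrite /margin /meb; set E := (fun x : 'I_1 -> R => _) @` _.
have E_lb : has_lbound E.
  exists 0 => _ [x _ <-]; set S := (fun i : 'I_n => _) @` _.
  have S_ub : has_ubound S.
    by exists ((x ord0 - 1) ^+ 2) => _ [i _ <-]; rewrite big_ord1 mxE.
  apply: le_trans (ub_le_sup S_ub _); last by exists i1.
  by rewrite big_ord1 sqr_ge0.
apply: le_trans (ge_inf E_lb _) _; first by exists (fun=> 1).
apply: ge_sup => [|_ [i _ <-]]; first by eexists; exists i1.
by rewrite big_ord1 mxE subrr expr0n.
Qed.

Lemma meb_flip_col n (i0 i1 : 'I_n) : i1 != i0 -> 1 <= meb (flip_col i0).
Proof.
move=> i10; apply: lb_le_inf => [|_ [x _ <-]]; first by eexists; exists (fun=> 0).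
set S := (fun i : 'I_n => _) @` _.
have S_ub : has_ubound S.
  exists ((x ord0 - 1) ^+ 2 + (x ord0 + 1) ^+ 2) => _ [i _ <-].
  rewrite big_ord1 mxE; have := sqr_ge0 (x ord0 - 1); have := sqr_ge0 (x ord0 + 1).
  by case: ifP => _; rewrite ?opprK; lra.
have le_sup i : \sum_(j < 1) (x j - flip_col i0 i j) ^+ 2 <= sup S.
  by apply: (ub_le_sup S_ub); exists i.
move: (le_sup i0) (le_sup i1); rewrite !big_ord1 !mxE eqxx (negbTE i10) opprK.
nra.
Qed.

End HardInstances.

Lemma exists_ord_neq n (i0 : 'I_n) : (1 < n)%N -> exists i1 : 'I_n, i1 != i0.
Proof.
move=> n_gt1; have n_gt0 : (0 < n)%N := ltnW n_gt1.
case: (eqVneq (Ordinal n_gt0) i0) => [<-|neq]; last by exists (Ordinal n_gt0).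
by exists (Ordinal n_gt1); apply/eqP => -[].
Qed.

Lemma not_sublinear_of_separates (R : realType) (d0 : measure_display)
    (Omega : measurableType d0) (P : probability Omega R)
    (alg : forall n d : nat, Omega -> qtree R n d) :
  cost_measurable alg ->
  (forall n (i0 i1 : 'I_n) w, i1 != i0 ->
     run (alg n 1%N w) (flip_col R i0) <> run (alg n 1%N w) (ones_col R n)) ->
  ~ sublinear_expected_cost P alg.
Proof.
move=> cost_mes separates; apply: not_sublinear_of_cost_ge_nnz => M0.
exists M0.+2, 1%N, (ones_col R M0.+2); rewrite nnz_ones_col.
split=> //; [exact: unit_rows_ones_col | exact: leqW (leqnSn M0) |].
apply: expected_cost_ge; first exact/cost_mes/unit_rows_ones_col.
move=> w; apply: cost_ones_col => i0.
have [i1 i10] := exists_ord_neq i0 (isT : (1 < M0.+2)%N).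
exact: separates i10.
Qed.

Theorem mainTheorem19 (R : realType) :
  (forall (d0 : measure_display) (Omega : measurableType d0)
     (P : probability Omega R) (alg : forall n d : nat, Omega -> qtree R n d),
     cost_measurable alg ->
     (forall n d (A : 'M[R]_(n, d)) (w : Omega), unit_rows A -> (0 < n)%N ->
        margin A - 2^-1 <= run (alg n d w) A <= margin A) ->
     ~ sublinear_expected_cost P alg)
  /\
  (forall (d0 : measure_display) (Omega : measurableType d0)
     (P : probability Omega R) (alg : forall n d : nat, Omega -> qtree R n d),
     cost_measurable alg ->
     (forall n d (A : 'M[R]_(n, d)) (w : Omega), unit_rows A -> (0 < n)%N ->
        meb A <= run (alg n d w) A <= meb A + 2^-1) ->
     ~ sublinear_expected_cost P alg).
Proof.
split=> d0 Omega P alg cost_mes approx; apply: (not_sublinear_of_separates cost_mes).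
all: move=> n i0 i1 w i10 run_eq; have n_gt0 := leq_ltn_trans (leq0n i0) (ltn_ord i0).
all: have /andP[a1 a2] := approx n 1%N _ w (@unit_rows_ones_col R n) n_gt0.
all: have /andP[b1 b2] := approx n 1%N _ w (unit_rows_flip_col R i0) n_gt0.
all: rewrite run_eq in b1 b2.
- by have := margin_ones_col R n_gt0; have := margin_flip_col R i10; lra.
- by have := meb_ones_col R n_gt0; have := meb_flip_col R i10; lra.
Qed.
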